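(* Let $\Sigma:\ \dot x=-(A-M)x+d$ be $\gamma$-robust for some $\gamma>0$ and let $u=(A-M)^{-1}\mathbb{1}$. Let $i\neq k$ with $(M)_{ik}=0$ and $m_{ik}>0$, and suppose $-(A-M-m_{ik}e_ie_k^{\mathrm T})$ is Hurwitz. Then $\bar u=(A-M-m_{ik}e_ie_k^{\mathrm T})^{-1}\mathbb{1}$ satisfies $$\bar u_i\ \ge\ u_i+\frac{m_{ik}}{a_i}u_k.$$
   Context: $A=\mathrm{diag}(a_1,\dots,a_N)$ with all $a_i>0$, $M\in\mathbb{R}^{N\times N}$ has zero diagonal and nonnegative off-diagonal entries; $e_i$ is the $i$th standard basis vector and $\mathbb{1}$ the all-ones vector. For $\gamma>0$, a system $\dot x=-(A-M)x+d$ is $\gamma$-robust if $-(A-M)$ is Hurwitz and for every bounded disturbance $d$, the solution with $x(0)=0$ satisfies $\max_{p}|x_p(t)|\le\gamma\max_p\sup_{s\ge0}|d_p(s)|$ for all $t\ge0$. *)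

From HB Require Import structures.
From mathcomp Require Import all_boot all_order all_algebra.
From mathcomp Require Import all_classical all_reals all_analysis.
From mathcomp Require complex.
Import complex.ComplexField.
Set Implicit Arguments. Unset Strict Implicit. Unset Printing Implicit Defensive.
Import Order.TTheory GRing.Theory Num.Theory numFieldNormedType.Exports.
Local Open Scope classical_set_scope.
Local Open Scope ring_scope.

Definition hurwitz (R : realType) (N : nat) (B : 'M[R]_N) : Prop :=
  forall z : complex.complex R,
    root (char_poly (map_mx (fun x : R => complex.Complex x 0) B)) z ->
    complex.Re z < 0.

Definition is_solution (R : realType) (N : nat) (B : 'M[R]_N)
    (d x : 'I_N -> R -> R) : Prop :=
  (forall p, x p 0 = 0) /\
  (forall p, x p r @[r --> (0:R)^'+] --> x p 0) /\
  (forall p (t : R), 0 < t ->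
     is_derive t 1 (x p) (\sum_q B p q * x q t + d p t)).

(* gamma-robustness of  x' = -(A - M) x + d , with K := A - M. *)
Definition robust (R : realType) (N : nat) (gamma : R) (K : 'M[R]_N) : Prop :=
  hurwitz (- K) /\
  forall (d x : 'I_N -> R -> R) (D : R),
    (forall p (s : R), 0 <= s -> `|d p s| <= D) ->
    is_solution (- K) d x ->
    forall p (t : R), 0 <= t -> `|x p t| <= gamma * D.

From HB Require Import structures.
From mathcomp Require Import all_boot all_order all_algebra.
From mathcomp Require Import all_classical all_reals all_analysis.
From mathcomp Require Import polyrcf lra.
From mathcomp Require complex.
Import complex.ComplexField.
Import Order.TTheory GRing.Theory Num.Theory.
Local Open Scope ring_scope.

(* Write K := A - M and Kb := K - m e_i e_k^T, so that u = K^-1 1 and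
   ubar = Kb^-1 1.  Both K and Kb are Z-matrices (nonpositive off-diagonal
   entries) and -K, -Kb are Hurwitz (for K this is part of robustness).
   1. A Z-matrix K with t I + K nonsingular for every t >= 0 is invertible
      with an entrywise nonnegative inverse.  For t large, t I + K is
      diagonally dominant and the row sums of adj(t I + K) are positive by a
      minimum principle; as t decreases to 0 these polynomial row sums can
      never vanish (a positive supersolution of a Z-matrix system is strictly
      positive), so they stay positive down to t = 0, where they provide a
      positive vector y with K y > 0.  The minimum principle then shows that
      every column of K^-1 is nonnegative.
   2. A Hurwitz matrix -K has no eigenvalue t >= 0, so step 1 applies to K
      and to Kb.
   3. The rank-one update formula gives ubar = u + m Kb^-1 e_i u_k, hence
      ubar_i = u_i + m (Kb^-1)_ii u_k, and (Kb^-1)_ii >= 1 / Kb_ii = 1 / a_i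
      since Kb^-1 >= 0 and Kb is a Z-matrix. *)

Definition Zmatrix {R : numDomainType} {N : nat} (K : 'M[R]_N) : Prop :=
  forall p q, p != q -> K p q <= 0.

Section MinimumPrinciple.
Context {R : realFieldType} {N : nat} {K : 'M[R]_N}.
Hypothesis ZK : Zmatrix K.

(* Minimum principle: if a Z-matrix admits a positive strict supersolution
   y (y > 0, K y > 0), then every supersolution x (K x >= 0) is nonnegative.
   Look at the index j minimising x_j / y_j. *)
Lemma Zmatrix_min_principle (y x : 'I_N -> R) :
  (forall j, 0 < y j) -> (forall j, 0 < \sum_l K j l * y l) ->
  (forall j, 0 <= \sum_l K j l * x l) -> forall j, 0 <= x j.
Proof.
move=> y_gt0 Ky_gt0 Kx_ge0 j0.
have [j _ jmin] :=
  @Order.TotalTheory.arg_minP _ _ _ j0 xpredT (fun j => x j / y j) isT.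
rewrite leNgt; apply/negP => xj0_lt0.
set mu := x j / y j.
have mu_lt0 : mu < 0.
  by apply: le_lt_trans (jmin j0 isT) _; rewrite pmulr_llt0 ?invr_gt0.
(* componentwise x >= mu y, with equality at j *)
have Kx_le : \sum_l K j l * x l <= mu * \sum_l K j l * y l.
  rewrite mulr_sumr; apply: ler_sum => l _; rewrite mulrCA.
  have [->|lj] := eqVneq l j; first by rewrite /mu divfK // gt_eqF.
  apply: ler_wnM2l; first by apply: ZK; rewrite eq_sym.
  by rewrite -ler_pdivlMr ?y_gt0 //; apply: jmin.
have := le_trans (Kx_ge0 j) Kx_le.
by rewrite pmulr_lge0 ?Ky_gt0 // leNgt mu_lt0.
Qed.

(* A nonnegative vector x with constant positive row sums K x = c 1 is
   strictly positive: at a zero entry the row sum would be <= 0. *)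
Lemma Zmatrix_pos_principle (x : 'I_N -> R) (c : R) :
  (forall j, 0 <= x j) -> (forall j, \sum_l K j l * x l = c) -> 0 < c ->
  forall j, 0 < x j.
Proof.
move=> x_ge0 Kx c_gt0 j; rewrite lt_neqAle x_ge0 andbT; apply/negP => /eqP xj0.
suff : \sum_l K j l * x l <= 0 by rewrite Kx leNgt c_gt0.
apply: sumr_le0 => l _; have [->|lj] := eqVneq l j; first by rewrite -xj0 mulr0.
by apply: mulr_le0_ge0; [apply: ZK; rewrite eq_sym|].
Qed.

(* Consequently, a nonsingular Z-matrix with a positive strict
   supersolution has an entrywise nonnegative inverse: column q of K^-1 is a
   supersolution since K K^-1 = I. *)
Lemma Zmatrix_inv_ge0 (y : 'I_N -> R) :
  K \in unitmx -> (forall j, 0 < y j) -> (forall j, 0 < \sum_l K j l * y l) ->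
  forall p q, 0 <= invmx K p q.
Proof.
move=> Kunit y_gt0 Ky_gt0 p q.
apply: (@Zmatrix_min_principle y (fun l => invmx K l q) y_gt0 Ky_gt0).
move=> j; have := congr1 (fun X : 'M[R]_N => X j q) (mulmxV Kunit).
by rewrite !mxE => ->; apply: ler0n.
Qed.

Lemma Zmatrix_inv_diag (i : 'I_N) :
  K \in unitmx -> (forall p q, 0 <= invmx K p q) -> 0 < K i i ->
  (K i i)^-1 <= invmx K i i.
Proof.
move=> Kunit Kinv_ge0 Kii_gt0.
rewrite -(ler_pM2l Kii_gt0) mulfV ?gt_eqF //.
have := congr1 (fun X : 'M[R]_N => X i i) (mulmxV Kunit).
rewrite !mxE eqxx mulr1n (bigD1 i) //= => <-.
rewrite gerDl; apply: sumr_le0 => l li.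
by apply: mulr_le0_ge0; [apply: ZK; rewrite eq_sym|].
Qed.

End MinimumPrinciple.

Section RealPolynomials.
Context {R : rcfType}.

(* A polynomial with positive leading coefficient and no root in [a, +oo)
   is positive on [a, +oo): otherwise the intermediate value theorem would
   produce a root between t and a point where p is already positive. *)
Lemma poly_pos_right (p : {poly R}) (a : R) :
  0 < lead_coef p -> (forall t, a <= t -> p.[t] != 0) ->
  forall t, a <= t -> 0 < p.[t].
Proof.
move=> lc_gt0 noroot t at_.
have [n pn] := poly_pinfty_gt_lc lc_gt0.
set s := Num.max n t.
have ps_gt0 : 0 < p.[s] by apply: lt_le_trans lc_gt0 (pn _ _); rewrite le_max lexx.
rewrite ltNge; apply/negP => pt_le0.
have ts : t <= s by rewrite le_max lexx orbT.
have [x /andP[tx _] rx] := polyrcf.poly_ivt ts (mulr_le0_ge0 pt_le0 (ltW ps_gt0)).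
by move: (noroot x (le_trans at_ tx)); rewrite (rootP rx) eqxx.
Qed.

(* Continuation principle on [a, b]: a finite family of polynomials that is
   positive at b, and such that "all nonnegative at r" forces "all positive
   at r" for r in [a, b), is positive at a.  Go left from b to the last root
   r of their product: all of them are nonnegative at r (a sign change would
   give a root in (r, b)), hence positive at r, so r cannot be a root. *)
Lemma poly_pos_continuation {I : finType} (P : I -> {poly R}) {a b : R} :
  a < b -> (forall l, 0 < (P l).[b]) ->
  (forall r, a <= r -> r < b -> (forall l, 0 <= (P l).[r]) ->
     forall l, 0 < (P l).[r]) ->
  forall l, 0 < (P l).[a].
Proof.
move=> ab Pb_gt0 step l0; rewrite ltNge; apply/negP => Pa_le0.
pose Pi := \prod_l P l.
have Pi_neq0 : Pi != 0.
  have : 0 < Pi.[b] by rewrite horner_prod; apply: prodr_gt0 => l _.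
  by apply: contraTneq => ->; rewrite horner0 ltxx.
have rin := prev_root_in Pi a b; rewrite (min_idPl (ltW ab)) in rin.
have rb := prev_root_lt ab Pi_neq0.
have noroot := prev_noroot (p := Pi) (a := a) (b := b).
have [l1 Pr_le0] : exists l, (P l).[prev_root Pi a b] <= 0.
  case: prev_rootP => [Pi0 | y _ Piy _ _ | c _ -> _].
  - by move: Pi_neq0; rewrite Pi0 eqxx.
  - move: Piy; rewrite /Pi horner_prod => /eqP /prodf_eq0 [l _ /eqP Pl0].
    by exists l; rewrite Pl0.
  - by exists l0; rewrite (min_idPl (ltW ab)).
set r := prev_root Pi a b in rin rb noroot Pr_le0.
have ar : a <= r by move: rin; rewrite in_itv /= => /andP[].
have Pr_ge0 : forall l, 0 <= (P l).[r].
  move=> l; rewrite leNgt; apply/negP => Pr_lt0.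
  have [x xin rx] :=
    polyrcf.poly_ivt (ltW rb) (mulr_le0_ge0 (ltW Pr_lt0) (ltW (Pb_gt0 l))).
  move: xin; rewrite in_itv /= => /andP[rx_le xb_le].
  have x_in : x \in `]r, b[.
    rewrite in_itv /= !lt_neqAle rx_le xb_le !andbT.
    apply/andP; split; apply: contraTneq rx.
      by move=> <-; rewrite /root lt_eqF.
    by move=> ->; rewrite /root gt_eqF.
  move: (noroot x x_in).
  by rewrite /root /Pi horner_prod (bigD1 l) //= (rootP rx) mul0r eqxx.
by have := step r ar rb Pr_ge0 l1; rewrite ltNge Pr_le0.
Qed.

End RealPolynomials.

Section ShiftedMatrix.
Context {R : comNzRingType} {N : nat} (K : 'M[R]_N).

Lemma char_poly_mx_eval (t : R) :
  map_mx (horner_eval t) (char_poly_mx (- K)) = t%:M + K.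
Proof.
apply/matrixP => p q; rewrite !mxE horner_evalE !hornerE opprK.
by rewrite hornerMn hornerX.
Qed.

Lemma char_poly_eval (t : R) : (char_poly (- K)).[t] = \det (t%:M + K).
Proof. by rewrite -char_poly_mx_eval det_map_mx. Qed.

(* Row sums of the adjugate of the characteristic matrix of -K: polynomials
   whose values at t form the vector adj (t I + K) 1. *)
Definition adj_rowsum (l : 'I_N) : {poly R} :=
  \sum_q (\adj (char_poly_mx (- K))) l q.

Lemma shift_adj_rowsum (t : R) (j : 'I_N) :
  \sum_l (t%:M + K) j l * (adj_rowsum l).[t] = \det (t%:M + K).
Proof.
have := congr1 (map_mx (horner_eval t)) (mul_mx_adj (char_poly_mx (- K))).
rewrite map_mxM map_scalar_mx char_poly_mx_eval -char_poly_eval => E.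
have := congr1 (fun X => (X *m (const_mx 1 : 'cV[R]_N)) j 0) E.
rewrite /= -mulmxA mul_scalar_mx !mxE mulr1 horner_evalE => <-.
apply: eq_bigr => l _; rewrite !mxE horner_sum; congr (_ * _).
by apply: eq_bigr => q _; rewrite !mxE mulr1.
Qed.

End ShiftedMatrix.

Lemma Zmatrix_shift {R : numDomainType} {N : nat} {K : 'M[R]_N} (t : R) :
  Zmatrix K -> Zmatrix (t%:M + K).
Proof. by move=> ZK p q pq; rewrite !mxE (negPf pq) mulr0n add0r ZK. Qed.

(* For t larger than the total mass of K, t I + K is strictly diagonally
   dominant and in particular has positive row sums. *)
Lemma shift_row_sum_gt0 {R : realFieldType} {N : nat} (K : 'M[R]_N) :
  exists2 T : R, 0 < T & forall j, 0 < \sum_l (T%:M + K) j l * 1.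
Proof.
pose S := \sum_p \sum_q `|K p q|.
have S_ge0 : 0 <= S by apply: sumr_ge0 => p _; apply: sumr_ge0.
exists (1 + S) => [|j]; first lra.
under eq_bigr do rewrite mulr1 !mxE.
rewrite big_split /= (bigD1 j) //= eqxx mulr1n big1 ?addr0; last first.
  by move=> l /negPf; rewrite eq_sym => ->.
have row_ge : - \sum_l `|K j l| <= \sum_l K j l.
  rewrite -sumrN; apply: ler_sum => l _; rewrite lerNl -normrN; exact: ler_norm.
have row_le : \sum_l `|K j l| <= S.
  rewrite /S [X in _ <= X](bigD1 j) //= lerDl.
  by apply: sumr_ge0 => p _; apply: sumr_ge0.
lra.
Qed.

(* The vectors y(t) = adj (t I + K) 1 satisfy
   (t I + K) y(t) = det (t I + K) 1 with det (t I + K) > 0; they are positive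
   for large t and, by continuation, at t = 0. *)
Theorem Mmatrix_inv_ge0 {R : rcfType} {N : nat} {K : 'M[R]_N} :
  Zmatrix K -> (forall t, 0 <= t -> \det (t%:M + K) != 0) ->
  K \in unitmx /\ (forall p q, 0 <= invmx K p q).
Proof.
move=> ZK det_neq0.
have det_gt0 : forall t, 0 <= t -> 0 < \det (t%:M + K).
  move=> t t_ge0; rewrite -char_poly_eval.
  apply: (poly_pos_right _ 0 _ _ t t_ge0) => [|s s_ge0].
    by rewrite (eqP (char_poly_monic _)) ltr01.
  by rewrite char_poly_eval det_neq0.
have y_pos : forall t, 0 <= t -> (forall l, 0 <= (adj_rowsum K l).[t]) ->
    forall l, 0 < (adj_rowsum K l).[t].
  move=> t t_ge0 y_ge0.
  exact: (Zmatrix_pos_principle (Zmatrix_shift t ZK) _ _ y_ge0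
            (shift_adj_rowsum K t) (det_gt0 t t_ge0)).
have [T T_gt0 T_dom] := shift_row_sum_gt0 K.
have y0_gt0 : forall l, 0 < (adj_rowsum K l).[0].
  apply: (poly_pos_continuation (adj_rowsum K) T_gt0) => [l|r r_ge0 _];
    last exact: y_pos.
  apply: y_pos (ltW T_gt0) _ l.
  apply: (Zmatrix_min_principle (Zmatrix_shift T ZK) (fun=> 1)
            (fun l => (adj_rowsum K l).[T]) (fun=> ltr01) T_dom) => j.
  by rewrite shift_adj_rowsum ltW // det_gt0 // ltW.
have shift0 : 0%:M + K = K by rewrite raddf0 add0r.
have Kunit : K \in unitmx.
  by rewrite unitmxE unitfE -shift0 gt_eqF ?det_gt0.
split=> //.
apply: (Zmatrix_inv_ge0 ZK (fun l => (adj_rowsum K l).[0]) Kunit y0_gt0) => j.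
have := shift_adj_rowsum K 0 j; rewrite shift0 => ->.
by rewrite -shift0 det_gt0.
Qed.

(* If -K is Hurwitz then no t >= 0 is an eigenvalue of -K, i.e. t I + K is
   nonsingular for t >= 0 (a real root of the characteristic polynomial is
   a complex eigenvalue with real part t). *)
Lemma hurwitz_shift_nonsingular {R : realType} {N : nat} {K : 'M[R]_N} :
  hurwitz (- K) -> forall t : R, 0 <= t -> \det (t%:M + K) != 0.
Proof.
move=> HK t t_ge0; rewrite -char_poly_eval; apply/negP => /eqP Qt.
have := HK (complex.Complex t 0).
rewrite -(map_char_poly (@complex.real_complex_def R (Phant R))).
have -> : complex.Complex t 0 = @complex.real_complex_def R (Phant R) t by [].
rewrite /root horner_map Qt rmorph0 eqxx => /(_ isT) /=.
by rewrite ltNge t_ge0.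
Qed.

Lemma rank_one_update_entry (R : fieldType) (N : nat) (K : 'M[R]_N) (m : R)
    (i k : 'I_N) (v : 'cV[R]_N) :
  let Kb := K - m *: delta_mx i k in
  K \in unitmx -> Kb \in unitmx ->
  (invmx Kb *m v) i 0 = (invmx K *m v) i 0 + m * invmx Kb i i * (invmx K *m v) k 0.
Proof.
move=> Kb Kunit Kbunit; set u := invmx K *m v.
have Kbu : Kb *m u = v - m *: (delta_mx i k *m u).
  have Ku : K *m u = v by rewrite /u mulmxA mulmxV // mul1mx.
  by rewrite /Kb mulmxBl Ku -scalemxAl.
clearbody u.
have -> : invmx Kb *m v = u + m *: (invmx Kb *m (delta_mx i k *m u)).
  by rewrite -{1}(mulKmx Kbunit u) Kbu mulmxBr -scalemxAr subrK.
have delta_u : forall l, (delta_mx i k *m u) l 0 = (l == i)%:R * u k 0.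
  move=> l; rewrite mxE (bigD1 k) //= big1 ?addr0.
    by rewrite mxE eqxx andbT.
  by move=> j /negPf jk; rewrite mxE jk andbF mul0r.
rewrite !mxE (bigD1 i) //= big1 ?addr0; first by rewrite delta_u eqxx mul1r mulrA.
by move=> l /negPf li; rewrite delta_u li mul0r mulr0.
Qed.

Theorem mainTheorem10 (R : realType) (N : nat) (a : 'I_N -> R) (M : 'M[R]_N)
  (gamma : R) (i k : 'I_N) (m : R) :
  (forall p, 0 < a p) ->
  (forall p, M p p = 0) ->
  (forall p q, p != q -> 0 <= M p q) ->
  0 < gamma ->
  robust gamma (diag_mx (\row_p a p) - M) ->
  i != k -> M i k = 0 -> 0 < m ->
  hurwitz (- (diag_mx (\row_p a p) - M - m *: delta_mx i k)) ->
  let u := invmx (diag_mx (\row_p a p) - M) *m (const_mx 1 : 'cV[R]_N) in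
  let ubar := invmx (diag_mx (\row_p a p) - M - m *: delta_mx i k) *m (const_mx 1 : 'cV[R]_N) in
  ubar i 0 >= u i 0 + m / a i * u k 0.
Proof.
move=> a_gt0 M_diag M_ge0 _ [K_hurwitz _] ik _ m_gt0 Kb_hurwitz /=.
set K := diag_mx (\row_p a p) - M in K_hurwitz *.
set Kb := K - m *: delta_mx i k in Kb_hurwitz *.
have ZK : Zmatrix K.
  by move=> r s rs; rewrite !mxE (negPf rs) mulr0n sub0r oppr_le0 M_ge0.
have ZKb : Zmatrix Kb.
  move=> r s rs; have := ZK r s rs; rewrite !mxE.
  have : 0 <= m * ((r == i) && (s == k))%:R by rewrite mulr_ge0 // ltW.
  lra.
have [Kunit Kinv_ge0] := Mmatrix_inv_ge0 ZK (hurwitz_shift_nonsingular K_hurwitz).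
have [Kbunit Kbinv_ge0] := Mmatrix_inv_ge0 ZKb (hurwitz_shift_nonsingular Kb_hurwitz).
have Kbii : Kb i i = a i.
  by rewrite !mxE eqxx mulr1n M_diag (negPf ik) andbF mulr0 !subr0.
have uk_ge0 : 0 <= (invmx K *m (const_mx 1 : 'cV[R]_N)) k 0.
  by rewrite mxE; apply: sumr_ge0 => l _; rewrite mxE mulr1 Kinv_ge0.
rewrite rank_one_update_entry // lerD2l -!mulrA.
apply: ler_wpM2l; first exact: ltW.
apply: ler_wpM2r => //.
rewrite -Kbii; apply: (Zmatrix_inv_diag ZKb) => //.
by rewrite Kbii.
Qed.
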